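(* Let $\Phi$ be a real $N \times d$ matrix satisfying the Restricted Isometry Condition with parameters $(2n, \varepsilon)$ for $\varepsilon = 0.03/\sqrt{\log n}$. Let $v \neq 0$ be an $n$-sparse vector in $\mathbb{R}^d$ and $x = \Phi v$. Then at any iteration of ROMP run on input $x$ and sparsity level $n$, after the regularization step, the newly selected set $J_0$ satisfies $J_0 \neq \emptyset$, $J_0 \cap I = \emptyset$ (where $I$ is the index set at the start of that iteration), and $$|J_0 \cap \mathrm{supp}(v)| \ge \tfrac{1}{2}|J_0|.$$
   Context: A vector $v \in \mathbb{R}^d$ is $n$-sparse if $|\mathrm{supp}(v)| \le n$. A matrix $\Phi$ satisfies the Restricted Isometry Condition with parameters $(m,\varepsilon)$, $\varepsilon\in(0,1)$, if $(1-\varepsilon)\|w\|_2 \le \|\Phi w\|_2 \le (1+\varepsilon)\|w\|_2$ for all $m$-sparse $w$. For a vector $y$, $y|_T$ denotes its restriction to the coordinates in $T$. ROMP with input $x \in \mathbb{R}^N$ and sparsity level $n$: Initialize $I = \emptyset$, $r = x$. Repeat until $r = 0$: (Identify) let $u = \Phi^* r$ and choose a set $J$ of the $n$ biggest coordinates of $u$ in magnitude, or all nonzero coordinates of $u$, whichever set is smaller; (Regularize) among all subsets $J_0 \subset J$ with $|u(i)| \le 2|u(j)|$ for all $i,j\in J_0$, choose one maximizing $\|u|_{J_0}\|_2$; (Update) $I \leftarrow I \cup J_0$, $y = \operatorname{argmin}_{z \in \mathbb{R}^I}\|x - \Phi z\|_2$, $r = x - \Phi y$. Output $I$. *)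

From HB Require Import structures.
From mathcomp Require Import all_boot all_order all_algebra.
From mathcomp Require Import reals exp.
Set Implicit Arguments. Unset Strict Implicit. Unset Printing Implicit Defensive.
Import Order.TTheory GRing.Theory Num.Theory.
Local Open Scope ring_scope.

Section ROMP.
Variable R : realType.

Definition norm2 {k : nat} (w : 'cV[R]_k) : R := Num.sqrt (\sum_i w i 0 ^+ 2).

Definition supp {k : nat} (w : 'cV[R]_k) : {set 'I_k} := [set i | w i 0 != 0].
Definition sparse {k : nat} (m : nat) (w : 'cV[R]_k) : Prop := (#|supp w| <= m)%N.

Definition restrict {k : nat} (w : 'cV[R]_k) (T : {set 'I_k}) : 'cV[R]_k :=
  \col_i (if i \in T then w i 0 else 0).

Definition RIC {N d : nat} (Phi : 'M[R]_(N, d)) (m : nat) (eps : R) : Prop :=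
  0 < eps < 1 /\
  forall w : 'cV[R]_d, sparse m w ->
    (1 - eps) * norm2 w <= norm2 (Phi *m w) /\ norm2 (Phi *m w) <= (1 + eps) * norm2 w.

Definition romp_identify {d : nat} (n : nat) (u : 'cV[R]_d) (J : {set 'I_d}) : Prop :=
  let nz := [set i | u i 0 != 0] in
  if (#|nz| <= n)%N then J = nz
  else #|J| = n /\ (forall i j, i \in J -> j \notin J -> `|u j 0| <= `|u i 0|).

Definition comparable_set {d : nat} (u : 'cV[R]_d) (J0 : {set 'I_d}) : Prop :=
  forall i j, i \in J0 -> j \in J0 -> `|u i 0| <= 2 * `|u j 0|.

Definition romp_regularize {d : nat} (u : 'cV[R]_d) (J J0 : {set 'I_d}) : Prop :=
  J0 \subset J /\ comparable_set u J0 /\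
  (forall J1 : {set 'I_d}, J1 \subset J -> comparable_set u J1 ->
     norm2 (restrict u J1) <= norm2 (restrict u J0)).

Definition is_argmin {N d : nat} (Phi : 'M[R]_(N, d)) (x : 'cV[R]_N)
    (I : {set 'I_d}) (y : 'cV[R]_d) : Prop :=
  supp y \subset I /\
  (forall z : 'cV[R]_d, supp z \subset I -> norm2 (x - Phi *m y) <= norm2 (x - Phi *m z)).

(* romp_reach Phi x n I r : (I, r) is the state (index set, residual) at the
   start of some iteration of some run of ROMP on input x, sparsity level n. *)
Inductive romp_reach {N d : nat} (Phi : 'M[R]_(N, d)) (x : 'cV[R]_N) (n : nat)
  : {set 'I_d} -> 'cV[R]_N -> Prop :=
| romp_init : romp_reach Phi x n set0 x
| romp_step I r J J0 y :
    romp_reach Phi x n I r -> r != 0 ->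
    romp_identify n (Phi^T *m r) J ->
    romp_regularize (Phi^T *m r) J J0 ->
    is_argmin Phi x (I :|: J0) y ->
    romp_reach Phi x n (I :|: J0) (x - Phi *m y).

End ROMP.

From HB Require Import structures.
From mathcomp Require Import all_boot all_order all_algebra.
From mathcomp Require Import reals exp.
From mathcomp Require Import ring lra zify.
Set Implicit Arguments. Unset Strict Implicit. Unset Printing Implicit Defensive.
Import Order.TTheory GRing.Theory Num.Theory.
Local Open Scope ring_scope.

(* Along a run of ROMP the residual is [r = Phi (v - y)], with [y] the least-squares fit of
   [Phi v] on the columns in [I]; so [r] is orthogonal to [Phi] on [I], the observation
   [u = Phi^T r] vanishes on [I] (whence [J0 :&: I = set0]), and inductively at least half
   of [I] lies in [supp v].  Let [v0] be the part of [v] outside [I].  By the RIC, [u]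
   approximates [v0] up to [ric_gamma e * |v0| * |z|] when tested against any [n]-sparse [z].
   Hence the [n] largest coordinates [J] of [u] carry energy at least [(1 - gamma)^2 |v0|^2],
   while at most [n] coordinates outside [supp v] carry at most [gamma^2 |v0|^2].
   Regularization keeps a [1/(K+1)] fraction of the energy of [J] in [J0] when [n <= 4^K],
   and inside a comparable set energy is spread evenly, so if more than half of [J0] lay
   outside [supp v] we would get [(1 - gamma)^2 < 8 (K+1) gamma^2]; the choice
   [e = 0.03 / sqrt (log n)] rules this out. *)

Section ScalarInequalities.
Variable R : rcfType.
Implicit Types s t : R.

Lemma ler_sqr_norm (a b : R) : `|a| <= `|b| -> a ^+ 2 <= b ^+ 2.
Proof.
by move=> ab; rewrite -[a ^+ 2]real_normK ?num_real // -[b ^+ 2]real_normK ?num_real // ler_sqr.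
Qed.

Lemma sqr_le_of_le_mul (a b : R) : 0 <= a -> a ^+ 2 <= b * a -> a ^+ 2 <= b ^+ 2.
Proof.
rewrite le0r => /orP[/eqP -> _|a0]; first by rewrite expr0n sqr_ge0.
by rewrite expr2 ler_pM2r // => ab; rewrite -expr2 ler_sqr ?nnegrE ?(ltW a0) ?(le_trans (ltW a0)).
Qed.

Lemma eq0_of_homogeneous_bound (f A c : R) : 0 <= A -> 0 <= c ->
  (forall s, `|s * f| <= c * (s ^+ 2 * A) / 2) -> f = 0.
Proof.
move=> A0 c0 bound.
have D0 : 0 < c * A + 1 by nra.
pose s := f / (c * A + 1).
have fE : f = s * (c * A + 1) by rewrite /s mulfVK // gt_eqF.
have := bound s; rewrite fE ger0_norm; last by nra.
move=> hs; have : s ^+ 2 == 0 by rewrite eq_le sqr_ge0 andbT expr2; nra.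
by rewrite sqrf_eq0 => /eqP ->; rewrite mul0r.
Qed.

(* Choosing [s, t] proportional to [sqrt B, sqrt A] turns the AM-GM bound into a product bound. *)
Lemma norm_le_of_homogeneous_bound (f A B c : R) : 0 <= A -> 0 <= B -> 0 <= c ->
  (forall s t, `|s * t * f| <= c * (s ^+ 2 * A + t ^+ 2 * B) / 2) ->
  `|f| <= c * (Num.sqrt A * Num.sqrt B).
Proof.
move=> A0 B0 c0 bound.
have [Ap|] := ltP 0 A; last first.
  move=> Ale0; have -> : f = 0.
    apply: (eq0_of_homogeneous_bound B0 c0) => t; have := bound 1 t.
    by rewrite (@le_anti _ _ A 0) ?Ale0 ?A0 // mul1r mulr0 add0r.
  by rewrite normr0 !mulr_ge0 ?sqrtr_ge0.
have [Bp|] := ltP 0 B; last first.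
  move=> Ble0; have -> : f = 0.
    apply: (eq0_of_homogeneous_bound A0 c0) => s; have := bound s 1.
    by rewrite (@le_anti _ _ B 0) ?Ble0 ?B0 // mulr1 mulr0 addr0.
  by rewrite normr0 !mulr_ge0 ?sqrtr_ge0.
have := bound (Num.sqrt B) (Num.sqrt A).
rewrite normrM ger0_norm ?mulr_ge0 ?sqrtr_ge0 //.
have := sqr_sqrtr A0; have := sqr_sqrtr B0.
have := sqrtr_gt0 A; have := sqrtr_gt0 B; rewrite Ap Bp.
move: (Num.sqrt A) (Num.sqrt B) => a b bp ap <- <- h.
have ab0 : 0 < b * a by rewrite mulr_gt0.
rewrite -(ler_pM2l ab0); move: h; rewrite !expr2; nra.
Qed.

End ScalarInequalities.

Section InnerProduct.
Variable R : realType.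
Implicit Types (k : nat) (s t : R).

Definition dot {k} (a b : 'cV[R]_k) : R := \sum_i a i 0 * b i 0.
Definition sqnorm {k} (a : 'cV[R]_k) : R := dot a a.
Definition sqnorm_on {k} (u : 'cV[R]_k) (T : {set 'I_k}) : R := \sum_(i in T) u i 0 ^+ 2.

Lemma dotC k (a b : 'cV[R]_k) : dot a b = dot b a.
Proof. by apply: eq_bigr => i _; rewrite mulrC. Qed.

Lemma dotDl k (a b c : 'cV[R]_k) : dot (a + b) c = dot a c + dot b c.
Proof. by rewrite /dot -big_split; apply: eq_bigr => i _; rewrite mxE mulrDl. Qed.

Lemma dotBl k (a b c : 'cV[R]_k) : dot (a - b) c = dot a c - dot b c.
Proof.
rewrite dotDl; congr (_ + _); rewrite /dot -sumrN.
by apply: eq_bigr => i _; rewrite mxE mulNr.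
Qed.

Lemma dotZl k s (a c : 'cV[R]_k) : dot (s *: a) c = s * dot a c.
Proof. by rewrite /dot big_distrr; apply: eq_bigr => i _; rewrite !mxE /= mulrA. Qed.

Lemma dotDr k (a b c : 'cV[R]_k) : dot c (a + b) = dot c a + dot c b.
Proof. by rewrite dotC dotDl !(dotC c). Qed.

Lemma dotBr k (a b c : 'cV[R]_k) : dot c (a - b) = dot c a - dot c b.
Proof. by rewrite dotC dotBl !(dotC c). Qed.

Lemma dotZr k s (a c : 'cV[R]_k) : dot c (s *: a) = s * dot c a.
Proof. by rewrite dotC dotZl dotC. Qed.

Lemma dot_eq0 k (a b : 'cV[R]_k) : (forall i, a i 0 * b i 0 = 0) -> dot a b = 0.
Proof. by move=> h; rewrite /dot big1. Qed.

Lemma dot_delta k (u : 'cV[R]_k) i : dot u (delta_mx i 0) = u i 0.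
Proof.
rewrite /dot (bigD1 i) //= big1 => [|j /negPf ji]; rewrite mxE ?eqxx ?mulr1 ?addr0 //.
by rewrite ji mulr0.
Qed.

Lemma dot_trmx N d (Phi : 'M[R]_(N, d)) (r : 'cV[R]_N) (z : 'cV[R]_d) :
  dot (Phi^T *m r) z = dot r (Phi *m z).
Proof.
rewrite /dot; under eq_bigr do rewrite !mxE big_distrl.
rewrite exchange_big; apply: eq_bigr => j _ /=.
rewrite !mxE big_distrr; apply: eq_bigr => i _ /=.
by rewrite !mxE (mulrC (Phi j i)) mulrA.
Qed.

Lemma sqnorm_ge0 k (a : 'cV[R]_k) : 0 <= sqnorm a.
Proof. by apply: sumr_ge0 => i _; rewrite -expr2 sqr_ge0. Qed.

Lemma sqnorm_eq0 k (a : 'cV[R]_k) : sqnorm a = 0 -> a = 0.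
Proof.
move=> a0; apply/matrixP => i j; rewrite (ord1 j) mxE.
have sq_ge0 i' : predT i' -> 0 <= a i' 0 * a i' 0 by rewrite -expr2 sqr_ge0.
by move: (psumr_eq0P sq_ge0 a0 (isT : predT i)) => /eqP; rewrite mulf_eq0 orbb => /eqP.
Qed.

Lemma sqnormD k (a b : 'cV[R]_k) : sqnorm (a + b) = sqnorm a + 2 * dot a b + sqnorm b.
Proof. rewrite /sqnorm !dotDl !dotDr (dotC b a); ring. Qed.

Lemma sqnormB k (a b : 'cV[R]_k) : sqnorm (a - b) = sqnorm a - 2 * dot a b + sqnorm b.
Proof. rewrite /sqnorm !dotBl !dotBr (dotC b a); ring. Qed.

Lemma sqnormZ k s (a : 'cV[R]_k) : sqnorm (s *: a) = s ^+ 2 * sqnorm a.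
Proof. rewrite /sqnorm dotZl dotZr; ring. Qed.

Lemma norm2E k (a : 'cV[R]_k) : norm2 a = Num.sqrt (sqnorm a).
Proof. by rewrite /norm2 /sqnorm /dot; under eq_bigr do rewrite expr2. Qed.

Lemma norm2_ge0 k (a : 'cV[R]_k) : 0 <= norm2 a.
Proof. by rewrite norm2E sqrtr_ge0. Qed.

Lemma sqr_norm2 k (a : 'cV[R]_k) : norm2 a ^+ 2 = sqnorm a.
Proof. by rewrite norm2E sqr_sqrtr // sqnorm_ge0. Qed.

Lemma cauchy_schwarz k (a b : 'cV[R]_k) : `|dot a b| <= norm2 a * norm2 b.
Proof.
rewrite !norm2E -[X in _ <= X]mul1r.
apply: norm_le_of_homogeneous_bound; rewrite ?sqnorm_ge0 // => s t.
have := sqnorm_ge0 (s *: a + t *: b); have := sqnorm_ge0 (s *: a - t *: b).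
rewrite sqnormB sqnormD !sqnormZ dotZl dotZr => h1 h2.
rewrite mul1r ler_norml; apply/andP; split; nra.
Qed.

End InnerProduct.

Section Supports.
Variable R : realType.
Implicit Types (k : nat) (s : R).

Lemma suppP k (a : 'cV[R]_k) (T : {set 'I_k}) :
  reflect (forall i, i \notin T -> a i 0 = 0) (supp a \subset T).
Proof.
apply: (iffP subsetP) => [sub i iT | a0 i].
  by apply/eqP; apply: contraNT iT => ai; apply: sub; rewrite inE.
by rewrite inE; apply: contraNT => /a0 ->.
Qed.

Lemma sparse_subset k m (a : 'cV[R]_k) (T : {set 'I_k}) :
  supp a \subset T -> (#|T| <= m)%N -> sparse m a.
Proof. by move=> /subset_leq_card aT Tm; apply: leq_trans Tm. Qed.

Lemma supp_subsetD k (a b : 'cV[R]_k) (T : {set 'I_k}) :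
  supp a \subset T -> supp b \subset T -> supp (a + b) \subset T.
Proof. by move=> /suppP a0 /suppP b0; apply/suppP => i iT; rewrite mxE a0 // b0 // addr0. Qed.

Lemma supp_subsetB k (a b : 'cV[R]_k) (T : {set 'I_k}) :
  supp a \subset T -> supp b \subset T -> supp (a - b) \subset T.
Proof. by move=> /suppP a0 /suppP b0; apply/suppP => i iT; rewrite !mxE a0 // b0 // subr0. Qed.

Lemma supp_subsetZ k s (a : 'cV[R]_k) (T : {set 'I_k}) :
  supp a \subset T -> supp (s *: a) \subset T.
Proof. by move=> /suppP a0; apply/suppP => i iT; rewrite mxE a0 // mulr0. Qed.

Lemma supp_restrict k (a : 'cV[R]_k) (T : {set 'I_k}) : supp (restrict a T) \subset T.
Proof. by apply/suppP => i iT; rewrite mxE (negPf iT). Qed.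

End Supports.

Section RestrictedIsometry.
Variables (R : realType) (N d m : nat) (Phi : 'M[R]_(N, d)) (e : R).
Hypothesis PhiRIC : RIC Phi m e.

Lemma RIC_eps : 0 < e < 1.
Proof. by case: PhiRIC. Qed.

Lemma RIC_norm2_le (w : 'cV[R]_d) : sparse m w -> norm2 (Phi *m w) <= (1 + e) * norm2 w.
Proof. by case: PhiRIC => _ RIP /RIP []. Qed.

Lemma RIC_sqnorm (w : 'cV[R]_d) : sparse m w ->
  (1 - e) ^+ 2 * sqnorm w <= sqnorm (Phi *m w) <= (1 + e) ^+ 2 * sqnorm w.
Proof.
case: PhiRIC => /andP[e0 e1] RIP /RIP [lo hi]; rewrite -!sqr_norm2.
have := norm2_ge0 w; have := norm2_ge0 (Phi *m w).
move: lo hi; move: (norm2 w) (norm2 (Phi *m w)) => x y lo hi y0 x0.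
have lo0 : 0 <= (1 - e) * x by rewrite mulr_ge0 // subr_ge0 ltW.
have dlo : 0 <= y - (1 - e) * x by rewrite subr_ge0.
have dhi : 0 <= (1 + e) * x - y by rewrite subr_ge0.
have := mulr_ge0 dlo (addr_ge0 y0 lo0).
have := mulr_ge0 dhi (addr_ge0 y0 (le_trans y0 hi)).
by rewrite !expr2 => *; apply/andP; split; nra.
Qed.

(* Polarization: the RIC for [a + b] and [a - b] controls the inner product. *)
Lemma RIC_dot (a b : 'cV[R]_d) (T : {set 'I_d}) :
  supp a \subset T -> supp b \subset T -> (#|T| <= m)%N ->
  `|dot (Phi *m a) (Phi *m b) - dot a b| <= (2 * e + e ^+ 2) * (norm2 a * norm2 b).
Proof.
move=> aT bT Tm; have /andP[e0 _] := RIC_eps.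
have polar (a' b' : 'cV[R]_d) : supp a' \subset T -> supp b' \subset T ->
    `|dot (Phi *m a') (Phi *m b') - dot a' b'| <=
      (2 * e + e ^+ 2) * (sqnorm a' + sqnorm b') / 2.
  move=> a'T b'T.
  have /andP[lo1 hi1] := RIC_sqnorm (sparse_subset (supp_subsetD a'T b'T) Tm).
  have /andP[lo2 hi2] := RIC_sqnorm (sparse_subset (supp_subsetB a'T b'T) Tm).
  have := sqnorm_ge0 (a' + b'); have := sqnorm_ge0 (a' - b').
  move: lo1 hi1 lo2 hi2; rewrite mulmxBr mulmxDr !sqnormB !sqnormD => lo1 hi1 lo2 hi2 hm hp.
  have := mulr_ge0 (sqr_ge0 e) hp; have := mulr_ge0 (sqr_ge0 e) hm.
  rewrite ler_norml; move: lo1 hi1 lo2 hi2; rewrite !expr2 => *; apply/andP; split; nra.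
rewrite !norm2E; apply: norm_le_of_homogeneous_bound; rewrite ?sqnorm_ge0 //; first nra.
move=> s t; have := polar _ _ (supp_subsetZ s aT) (supp_subsetZ t bT).
by rewrite -!scalemxAr !dotZl !dotZr !sqnormZ mulrBr !mulrA.
Qed.

End RestrictedIsometry.

Section RestrictedEnergy.
Variables (R : realType) (k : nat).
Implicit Types (u a b : 'cV[R]_k) (A B T : {set 'I_k}).

Lemma norm2_restrict u T : norm2 (restrict u T) = Num.sqrt (sqnorm_on u T).
Proof.
rewrite /norm2 /sqnorm_on [in RHS]big_mkcond /=; congr Num.sqrt; apply: eq_bigr => i _.
by rewrite mxE; case: ifP => // _; rewrite expr0n.
Qed.

Lemma dot_restrict a b T : supp b \subset T -> dot a b = dot (restrict a T) b.
Proof.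
move=> /suppP b0; apply: eq_bigr => i _; rewrite mxE.
by case: ifP => // /negbT /b0 ->; rewrite !mulr0.
Qed.

Lemma dot_restrict_self u T : dot u (restrict u T) = sqnorm_on u T.
Proof.
rewrite /dot /sqnorm_on [in RHS]big_mkcond /=; apply: eq_bigr => i _; rewrite mxE.
by case: ifP; rewrite ?mulr0 // expr2.
Qed.

Lemma sqnorm_on_ge0 u T : 0 <= sqnorm_on u T.
Proof. by apply: sumr_ge0 => i _; rewrite sqr_ge0. Qed.

Lemma sqnorm_onS u A B : A \subset B -> sqnorm_on u A <= sqnorm_on u B.
Proof.
move=> AB; rewrite [sqnorm_on u B](big_setID A) /= (setIidPr AB) lerDl.
by apply: sumr_ge0 => i _; rewrite sqr_ge0.
Qed.

Lemma sqnorm_on0 u : sqnorm_on u set0 = 0.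
Proof. by rewrite /sqnorm_on big_set0. Qed.

Lemma sqnorm_on1 u i : sqnorm_on u [set i] = u i 0 ^+ 2.
Proof. by rewrite /sqnorm_on big_set1. Qed.

Lemma sqnorm_on_le_card u T (M : R) :
  (forall i, i \in T -> `|u i 0| <= M) -> sqnorm_on u T <= #|T|%:R * M ^+ 2.
Proof.
move=> uM; rewrite mulr_natl -sumr_const; apply: ler_sum => i iT.
rewrite -real_normK ?num_real // ler_sqr ?nnegrE ?uM //.
exact: le_trans (normr_ge0 _) (uM i iT).
Qed.

Lemma sum_card_le A B (f g : 'I_k -> R) :
  (forall i j, i \in A -> j \in B -> f j <= g i) ->
  (\sum_(j in B) f j) *+ #|A| <= (\sum_(i in A) g i) *+ #|B|.
Proof.
move=> fg; rewrite -sumr_const -sumrMnl; apply: ler_sum => i iA.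
by rewrite -sumr_const; apply: ler_sum => j jB; apply: fg.
Qed.

End RestrictedEnergy.

Section IdentifyRegularize.
Variables (R : realType) (k n : nat) (u : 'cV[R]_k).
Implicit Types (J T : {set 'I_k}).

Lemma identify_card J : romp_identify n u J -> (#|J| <= n)%N.
Proof. by rewrite /romp_identify; case: ifP => [? ->|_ []->]. Qed.

Lemma identify_nonzero J : romp_identify n u J -> J \subset [set i | u i 0 != 0].
Proof.
rewrite /romp_identify; case: ifP => [_ -> //|/negbT]; rewrite -ltnNge => big [Jn Jmax].
apply/subsetP => i iJ; rewrite inE; apply/negP => /eqP ui0.
suff : ([set i | u i 0 != 0] \subset J) by move/subset_leq_card; rewrite Jn leqNgt big.
apply/subsetP => j; rewrite inE; apply: contraLR => jJ.
by have := Jmax i j iJ jJ; rewrite ui0 normr0 normr_le0 negbK.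
Qed.

Lemma identify_nonempty J : (0 < n)%N -> u != 0 -> romp_identify n u J -> exists j, j \in J.
Proof.
move=> n0 u0; have [i ui0] : exists i, u i 0 != 0.
  apply/existsP; apply: contraNT u0; rewrite negb_exists => /forallP u0.
  by apply/eqP/matrixP => i j; rewrite (ord1 j) mxE; apply/eqP/negPn/u0.
rewrite /romp_identify; case: ifP => [_ ->|_ [Jn _]]; first by exists i; rewrite inE.
by apply/set0Pn; rewrite -card_gt0 Jn.
Qed.

Lemma identify_sqnorm_max J T : romp_identify n u J -> (#|T| <= n)%N ->
  sqnorm_on u T <= sqnorm_on u J.
Proof.
rewrite /romp_identify; case: ifP => _ => [-> _|[Jn Jmax] Tn].
  rewrite [sqnorm_on u T](big_setID [set i | u i 0 != 0]) /= [X in _ + X]big1 ?addr0.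
    by apply: sqnorm_onS; apply: subsetIr.
  by move=> i; rewrite !inE negbK => /andP[/eqP -> _]; rewrite expr0n.
rewrite [sqnorm_on u T](big_setID J) [sqnorm_on u J](big_setID T) /= setIC lerD2l.
have TJ_JT : (#|T :\: J| <= #|J :\: T|)%N.
  by have := cardsID J T; have := cardsID T J; rewrite [T :&: J]setIC; lia.
have shift i j : i \in J :\: T -> j \in T :\: J -> u j 0 ^+ 2 <= u i 0 ^+ 2.
  by rewrite !inE => /andP[_ iJ] /andP[jJ _]; apply: ler_sqr_norm; apply: Jmax.
have := sum_card_le shift.
rewrite -[X in X <= _ -> _]mulr_natr -[X in _ <= X -> _]mulr_natr.
have [/eqP|JT0] := posnP #|J :\: T|.
  by rewrite cards_eq0 => /eqP JT0; move: TJ_JT; rewrite JT0 cards0 leqn0 cards_eq0 => /eqP ->.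
rewrite -(ler_nat R) in TJ_JT; rewrite -(ltr0n R) in JT0.
have := sqnorm_on_ge0 u (J :\: T).
move: TJ_JT JT0; move: (#|T :\: J|%:R) (#|J :\: T|%:R) => a b ab b0 S0 h.
by rewrite -(ler_pM2r b0); apply: le_trans h _; rewrite ler_wpM2l.
Qed.

Lemma comparable_set1 i : comparable_set u [set i].
Proof. by move=> a b; rewrite !inE => /eqP -> /eqP ->; have := normr_ge0 (u i 0); lra. Qed.

Lemma regularize_sqnorm_max (J J0 J1 : {set 'I_k}) : romp_regularize u J J0 ->
  J1 \subset J -> comparable_set u J1 -> sqnorm_on u J1 <= sqnorm_on u J0.
Proof.
case=> _ [_ J0max] J1J J1c; have := J0max J1 J1J J1c.
by rewrite !norm2_restrict ler_sqrt // sqnorm_on_ge0.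
Qed.

(* Dyadic shells [M/2^(m+1) < |u i| <= M/2^m] of [J] are comparable, so each carries at
   most the energy of [J0]; below level [K] the #|J| <= 4^K coordinates carry at most M^2. *)
Lemma regularize_sqnorm_ge (J J0 : {set 'I_k}) K i1 : romp_regularize u J J0 -> i1 \in J ->
  (#|J| <= 4 ^ K)%N -> sqnorm_on u J <= K.+1%:R * sqnorm_on u J0.
Proof.
move=> reg i1J JK; have J0max := regularize_sqnorm_max reg.
have [i0 i0J i0max] := arg_maxP (fun i => `|u i 0|) i1J.
set M := `|u i0 0|; have M0 : 0 <= M := normr_ge0 _.
pose S m := [set i in J | `|u i 0| <= M / 2%:R ^+ m].
have SJ m : S m \subset J by apply/subsetP => i; rewrite inE => /andP[].
have shell m : sqnorm_on u (S m :\: S m.+1) <= sqnorm_on u J0.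
  apply: J0max; first by apply: subset_trans (SJ m); apply: subsetDl.
  move=> a b; rewrite !inE => /andP[_ /andP[aJ ua]] /andP[ub /andP[bJ _]].
  rewrite bJ /= -ltNge in ub.
  have P0 : 0 < 2%:R ^+ m :> R by rewrite exprn_gt0.
  have : M / 2%:R ^+ m = 2 * (M / 2%:R ^+ m.+1) by rewrite exprS; field; rewrite gt_eqF.
  lra.
have telescope m : sqnorm_on u J <= m%:R * sqnorm_on u J0 + sqnorm_on u (S m).
  elim: m => [|m IH].
    have -> : S 0%N = J.
      by apply/setP => i; rewrite inE expr0 divr1 andb_idr // => /i0max.
    by rewrite mul0r add0r.
  apply: le_trans IH _; rewrite [sqnorm_on u (S m)](big_setID (S m.+1)) /=.
  rewrite -natr1 mulrDl mul1r -addrA lerD2l addrC lerD ?shell //.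
  by apply: sqnorm_onS; apply: subsetIr.
have tail : sqnorm_on u (S K) <= M ^+ 2.
  have P0 : 0 < 2%:R ^+ K :> R by rewrite exprn_gt0.
  apply: le_trans (sqnorm_on_le_card (M := M / 2%:R ^+ K) _) _.
    by move=> i; rewrite inE => /andP[].
  have : #|S K|%:R <= (2%:R ^+ K) ^+ 2 :> R.
    by rewrite exprAC -!natrX ler_nat (leq_trans (subset_leq_card (SJ K))).
  have q0 : 0 < (2%:R ^+ K) ^+ 2 :> R by rewrite !exprn_gt0.
  move=> SK; rewrite expr_div_n mulrA ler_pdivrMr // mulrC ler_wpM2l ?sqr_ge0 //.
have M2 : M ^+ 2 <= sqnorm_on u J0.
  have := J0max [set i0]; rewrite sqnorm_on1 -(real_normK (num_real (u i0 0))).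
  by apply; [rewrite sub1set | apply: comparable_set1].
apply: le_trans (telescope K) _.
by rewrite -natr1 mulrDl mul1r lerD2l (le_trans tail).
Qed.

Lemma comparable_sqnorm_card (J0 B : {set 'I_k}) : comparable_set u J0 -> B \subset J0 ->
  sqnorm_on u J0 *+ #|B| <= (4 * sqnorm_on u B) *+ #|J0|.
Proof.
move=> J0c BJ0.
have bound i j : i \in B -> j \in J0 -> u j 0 ^+ 2 <= 4 * u i 0 ^+ 2.
  move=> iB jJ0; have := J0c j i jJ0 (subsetP BJ0 i iB).
  rewrite -[2 * _](ger0_norm (_ : 0 <= 2 * `|u i 0|)) ?mulr_ge0 //.
  by move/ler_sqr_norm; rewrite exprMn real_normK ?num_real // -natrX.
by have := sum_card_le bound; rewrite /sqnorm_on mulr_sumr.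
Qed.

Lemma comparable_sqnorm_lt (J0 B : {set 'I_k}) : comparable_set u J0 -> B \subset J0 ->
  (#|J0| < 2 * #|B|)%N -> 0 < sqnorm_on u J0 -> sqnorm_on u J0 < 8 * sqnorm_on u B.
Proof.
move=> J0c BJ0 J0B J0pos; have := comparable_sqnorm_card J0c BJ0.
rewrite -[_ *+ #|B|]mulr_natr -[_ *+ #|J0|]mulr_natr.
have : (#|J0|%:R + 1 <= 2 * #|B|%:R :> R) by rewrite natr1 -natrM ler_nat.
have := sqnorm_on_ge0 u B; have := ler0n R #|J0|.
move: (#|J0|%:R) (#|B|%:R) (sqnorm_on u J0) (sqnorm_on u B) J0pos => c b P Q P0 c0 Q0 cb h.
rewrite ltNge; apply/negP => le8.
have : 0 <= Q * (2 * b - c - 1) by apply: mulr_ge0 => //; lra.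
have : 0 <= (P - 8 * Q) * b by apply: mulr_ge0; lra.
nra.
Qed.

End IdentifyRegularize.

Section LeastSquares.
Variables (R : realType) (N d : nat) (Phi : 'M[R]_(N, d)).

Lemma argmin_residual_orth (x : 'cV[R]_N) (I : {set 'I_d}) (y h : 'cV[R]_d) :
  is_argmin Phi x I y -> supp h \subset I -> dot (x - Phi *m y) (Phi *m h) = 0.
Proof.
case=> yI ymin hI; set r := x - Phi *m y.
have tangent t : 2 * (t * dot r (Phi *m h)) <= t ^+ 2 * sqnorm (Phi *m h).
  have := ymin _ (supp_subsetD yI (supp_subsetZ t hI)).
  rewrite !norm2E ler_sqrt ?sqnorm_ge0 // mulmxDr -scalemxAr opprD addrA -/r.
  by rewrite [sqnorm (r - _)]sqnormB sqnormZ dotZr; lra.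
apply: (@eq0_of_homogeneous_bound _ _ (sqnorm (Phi *m h)) 1 (sqnorm_ge0 _) ler01) => t.
have := tangent t; have := tangent (- t); rewrite sqrrN => *.
by rewrite mul1r ler_norml; apply/andP; split; lra.
Qed.

End LeastSquares.

(* The RIC distortion [2 e + e^2] of inner products, plus the contribution of the
   least-squares error [g]: [|g| <= (2 e + e^2) / (1 - e)^2 * |v0|], stretched by at most
   [(1 + e)^2] under [Phi]. *)
Definition ric_gamma (R : realType) (e : R) : R :=
  (2 * e + e ^+ 2) * (1 + (1 + e) ^+ 2 / (1 - e) ^+ 2).

Lemma ric_gamma_ge0 (R : realType) (e : R) : 0 <= e -> 0 <= ric_gamma e.
Proof.
move=> e0; apply: mulr_ge0; first by rewrite addr_ge0 ?mulr_ge0 ?sqr_ge0.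
by rewrite addr_ge0 ?divr_ge0 ?sqr_ge0.
Qed.

Section ROMPStep.
Variables (R : realType) (N d n : nat) (Phi : 'M[R]_(N, d)) (e : R).
Hypothesis PhiRIC : RIC Phi (2 * n) e.

Lemma residual_dot_approx (v0 g z : 'cV[R]_d) (I T0 T : {set 'I_d}) :
  supp v0 \subset T0 -> supp g \subset I -> supp z \subset T ->
  (#|I| <= 2 * n)%N -> (#|T0| <= n)%N -> (#|T| <= n)%N ->
  (1 - e) ^+ 2 * norm2 g <= (2 * e + e ^+ 2) * norm2 v0 ->
  `|dot (Phi *m v0 - Phi *m g) (Phi *m z) - dot v0 z| <= ric_gamma e * norm2 v0 * norm2 z.
Proof.
move=> v0T0 gI zT In T0n Tn g_small; have /andP[e0 e1] := RIC_eps PhiRIC.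
have TnT : (#|T| <= 2 * n)%N by apply: leq_trans Tn _; rewrite leq_pmull.
have v0z : `|dot (Phi *m v0) (Phi *m z) - dot v0 z| <= (2 * e + e ^+ 2) * (norm2 v0 * norm2 z).
  apply: (RIC_dot PhiRIC (T := T0 :|: T)).
  - by apply: subset_trans v0T0 _; apply: subsetUl.
  - by apply: subset_trans zT _; apply: subsetUr.
  - by apply: leq_trans (leq_card_setU _ _) _; rewrite mul2n -addnn leq_add.
have q0 : 0 < (1 - e) ^+ 2 by rewrite exprn_gt0 // subr_gt0.
have g_small' : norm2 g <= (2 * e + e ^+ 2) / (1 - e) ^+ 2 * norm2 v0.
  by rewrite mulrAC ler_pdivlMr // mulrC.
have gz : `|dot (Phi *m g) (Phi *m z)| <=
    (1 + e) ^+ 2 * ((2 * e + e ^+ 2) / (1 - e) ^+ 2 * norm2 v0) * norm2 z.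
  apply: le_trans (cauchy_schwarz _ _) _.
  have Pg := RIC_norm2_le PhiRIC (sparse_subset gI In).
  have Pz := RIC_norm2_le PhiRIC (sparse_subset zT TnT).
  apply: le_trans (ler_pM (norm2_ge0 _) (norm2_ge0 _) Pg Pz) _.
  rewrite mulrACA -expr2 -mulrA ler_wpM2l ?sqr_ge0 // ler_wpM2r ?norm2_ge0 //.
rewrite dotBl; set A := dot (Phi *m v0) _ in v0z *; set C := dot (Phi *m g) _ in gz *.
have -> : A - C - dot v0 z = (A - dot v0 z) - C by ring.
apply: le_trans (ler_normB _ _) (le_trans (lerD v0z gz) _).
rewrite le_eqVlt; apply/orP; left; apply/eqP; rewrite /ric_gamma; field.
by rewrite subr_eq0 gt_eqF.
Qed.

End ROMPStep.

Section ROMPIteration.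
Variables (R : realType) (N d n : nat) (Phi : 'M[R]_(N, d)) (e : R) (v : 'cV[R]_d).
Hypotheses (PhiRIC : RIC Phi (2 * n) e) (v_sparse : sparse n v).

Section State.
Variables (I : {set 'I_d}) (y : 'cV[R]_d).
Hypotheses (y_supp : supp y \subset I)
  (res_orth : forall h, supp h \subset I -> dot (Phi *m v - Phi *m y) (Phi *m h) = 0)
  (I_half : (#|I| <= 2 * #|I :&: supp v|)%N).

Local Notation r := (Phi *m v - Phi *m y).
Local Notation u := (Phi^T *m r).
Local Notation v0 := (restrict v (~: I)).
Local Notation g := (y - restrict v I).

Lemma card_suppU_le : (#|supp v :|: I| <= 2 * n)%N.
Proof.
have := cardsID (supp v) I; have := cardsUI (supp v) I; rewrite [supp v :&: I]setIC.
have := leq_trans (subset_leq_card (subsetIr I (supp v))) v_sparse.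
by move: v_sparse I_half; rewrite /sparse; lia.
Qed.

Lemma card_state_le : (#|I| <= 2 * n)%N.
Proof. exact: leq_trans (subset_leq_card (subsetUr _ _)) card_suppU_le. Qed.

Lemma corr_eq0_on_state i : i \in I -> u i 0 = 0.
Proof.
move=> iI; rewrite -(dot_delta u i) dot_trmx; apply: res_orth; apply/suppP => j jI.
by rewrite mxE; case: eqP => [ji|//]; rewrite ji iI in jI.
Qed.

Lemma supp_v0 : supp v0 \subset supp v :\: I.
Proof.
apply/suppP => i; rewrite mxE in_setC; case iI: (i \in I) => //=.
by rewrite !inE iI /= negbK => /eqP.
Qed.

Lemma supp_g : supp g \subset I.
Proof. exact: supp_subsetB y_supp (supp_restrict _ _). Qed.

Lemma residualE : r = Phi *m v0 - Phi *m g.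
Proof.
have vE : v = v0 + restrict v I.
  by apply/matrixP => i j; rewrite (ord1 j) !mxE in_setC; case: (i \in I); rewrite ?addr0 ?add0r.
by rewrite {1}vE mulmxDr mulmxBr opprB addrA.
Qed.

(* As [r] is orthogonal to [Phi g], [sqnorm (Phi g) = dot (Phi v0) (Phi g)], and
   [v0], [g] have disjoint supports inside [supp v :|: I]. *)
Lemma lsq_error_le : (1 - e) ^+ 2 * norm2 g <= (2 * e + e ^+ 2) * norm2 v0.
Proof.
have /andP[e0 _] := RIC_eps PhiRIC.
have v0T : supp v0 \subset supp v :|: I.
  by apply: subset_trans supp_v0 (subset_trans (subsetDl _ _) (subsetUl _ _)).
have := RIC_dot PhiRIC v0T (subset_trans supp_g (subsetUr _ _)) card_suppU_le.
have -> : dot v0 g = 0.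
  apply: dot_eq0 => i; case iI: (i \in I); first by rewrite mxE in_setC iI mul0r.
  by rewrite (suppP _ _ supp_g) ?iI ?mulr0.
have := res_orth supp_g; rewrite residualE dotBl subr0 => /eqP; rewrite subr_eq0 => /eqP ->.
have /andP[lo _] := RIC_sqnorm PhiRIC (sparse_subset supp_g card_state_le).
rewrite ger0_norm ?sqnorm_ge0 // => hi.
have [g0|gpos] := eqVneq (norm2 g) 0.
  by rewrite g0 mulr0 mulr_ge0 ?norm2_ge0 //; nra.
rewrite -(ler_pM2r (_ : 0 < norm2 g)); last by rewrite lt_def gpos norm2_ge0.
by have := le_trans lo hi; rewrite -sqr_norm2 [norm2 g ^+ 2]expr2 !mulrA.
Qed.

Lemma unrecovered_card : (#|supp v :\: I| <= n)%N.
Proof. exact: leq_trans (subset_leq_card (subsetDl _ _)) v_sparse. Qed.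

Lemma corr_approx (z : 'cV[R]_d) (T : {set 'I_d}) : supp z \subset T -> (#|T| <= n)%N ->
  `|dot u z - dot v0 z| <= ric_gamma e * norm2 v0 * norm2 z.
Proof.
move=> zT Tn; rewrite dot_trmx residualE.
apply: (residual_dot_approx PhiRIC supp_v0 supp_g zT card_state_le unrecovered_card Tn).
exact: lsq_error_le.
Qed.

Lemma corr_neq0 : r != 0 -> u != 0.
Proof.
apply: contraNneq => u0; apply/eqP/sqnorm_eq0.
have rE : Phi *m v - Phi *m y = Phi *m (v - y) by rewrite mulmxBr.
by rewrite /sqnorm {2}rE -dot_trmx u0 /dot big1 // => i _; rewrite mxE mul0r.
Qed.

Lemma identify_sqnorm_ge (J : {set 'I_d}) : ric_gamma e <= 1 -> romp_identify n u J ->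
  (1 - ric_gamma e) ^+ 2 * norm2 v0 ^+ 2 <= sqnorm_on u J.
Proof.
move=> g1 idJ; apply: le_trans (identify_sqnorm_max idJ unrecovered_card).
set T0 := supp v :\: I; set s := Num.sqrt (sqnorm_on u T0).
have cs : dot u v0 <= s * norm2 v0.
  rewrite (dot_restrict _ supp_v0) /s -norm2_restrict.
  exact: le_trans (ler_norm _) (cauchy_schwarz _ _).
have := corr_approx supp_v0 unrecovered_card.
rewrite -[dot v0 v0]/(sqnorm v0) -sqr_norm2 ler_norml => /andP[lo _].
rewrite -(sqr_sqrtr (sqnorm_on_ge0 u T0)) -/s -exprMn.
apply: sqr_le_of_le_mul; first by rewrite mulr_ge0 ?norm2_ge0 ?subr_ge0.
rewrite [X in _ <= X]mulrCA exprMn expr2 -mulrA ler_wpM2l ?subr_ge0 // mulrBl mul1r.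
by move: lo; rewrite -mulrA -expr2; lra.
Qed.

Lemma offsupport_sqnorm_le (B : {set 'I_d}) : [disjoint B & supp v] -> (#|B| <= n)%N ->
  sqnorm_on u B <= ric_gamma e ^+ 2 * norm2 v0 ^+ 2.
Proof.
move=> Bv Bn; have := corr_approx (supp_restrict u B) Bn.
have -> : dot v0 (restrict u B) = 0.
  apply: dot_eq0 => i; case iv: (i \in supp v).
    by rewrite [restrict u B _ _]mxE (disjointFl Bv iv) mulr0.
  by rewrite (suppP _ _ supp_v0) ?mul0r // inE iv andbF.
rewrite dot_restrict_self subr0 [norm2 (restrict u B)]norm2_restrict.
rewrite ger0_norm ?sqnorm_on_ge0 // => le.
rewrite -(sqr_sqrtr (sqnorm_on_ge0 u B)) -exprMn.
apply: sqr_le_of_le_mul; first exact: sqrtr_ge0.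
by rewrite sqr_sqrtr ?sqnorm_on_ge0.
Qed.

Lemma romp_step_selection K (J J0 : {set 'I_d}) : (0 < n)%N -> (n <= 4 ^ K)%N ->
  ric_gamma e <= 1 -> K.+1%:R * (8 * ric_gamma e ^+ 2) <= (1 - ric_gamma e) ^+ 2 ->
  r != 0 -> romp_identify n u J -> romp_regularize u J J0 ->
  [/\ J0 != set0, J0 :&: I = set0 & (#|J0| <= 2 * #|J0 :&: supp v|)%N].
Proof.
move=> n0 nK g1 gK r0 idJ regJ; have [J0J [J0c _]] := regJ.
have [j1 j1J] := identify_nonempty n0 (corr_neq0 r0) idJ.
have Jnz := identify_nonzero idJ.
have J0pos : 0 < sqnorm_on u J0.
  have j1max := regularize_sqnorm_max regJ _ (@comparable_set1 _ _ u j1).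
  apply: lt_le_trans (j1max _); last by rewrite sub1set.
  by rewrite sqnorm_on1 lt_def sqr_ge0 sqrf_eq0 andbT; have := subsetP Jnz j1 j1J; rewrite inE.
split.
- by apply: contraTneq J0pos => ->; rewrite sqnorm_on0 ltxx.
- apply/setP => i; rewrite !inE; apply/negbTE/andP => -[iJ0 iI].
  by have := subsetP Jnz i (subsetP J0J i iJ0); rewrite inE corr_eq0_on_state ?eqxx.
rewrite leqNgt; apply/negP => few; set B := J0 :\: supp v.
have J0B : (#|J0| < 2 * #|B|)%N by have := cardsID (supp v) J0; rewrite -/B; lia.
have Bn : (#|B| <= n)%N.
  by apply: leq_trans (identify_card idJ); apply/subset_leq_card/(subset_trans (subsetDl _ _)).
have Bv : [disjoint B & supp v] by rewrite disjoints_subset /B setDE subsetIr.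
have reg := regularize_sqnorm_ge regJ j1J (leq_trans (identify_card idJ) nK).
have k0 : 0 < K.+1%:R :> R by rewrite ltr0n.
have cmp := comparable_sqnorm_lt J0c (subsetDl _ _) J0B J0pos.
rewrite -(ltr_pM2l k0) in cmp.
have off := ler_wpM2l (ltW k0) (ler_wpM2l (ler0n R 8) (offsupport_sqnorm_le Bv Bn)).
have := ler_wpM2r (sqr_ge0 (norm2 v0)) gK; have := identify_sqnorm_ge g1 idJ.
rewrite -!mulrA in off *; lra.
Qed.

End State.

Lemma romp_reach_invariant K (I : {set 'I_d}) (r : 'cV[R]_N) : (0 < n)%N -> (n <= 4 ^ K)%N ->
  ric_gamma e <= 1 -> K.+1%:R * (8 * ric_gamma e ^+ 2) <= (1 - ric_gamma e) ^+ 2 ->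
  romp_reach Phi (Phi *m v) n I r ->
  exists2 y, r = Phi *m v - Phi *m y & [/\ supp y \subset I,
    forall h, supp h \subset I -> dot r (Phi *m h) = 0 & (#|I| <= 2 * #|I :&: supp v|)%N].
Proof.
move=> n0 nK g1 gK; elim=> [|I' r' J J0 y' _ [y -> [yI orth half]] r0 idJ regJ lsq].
  exists 0; rewrite ?mulmx0 ?subr0 //; split; rewrite ?set0I ?cards0 //.
    by apply/suppP => i _; rewrite mxE.
  move=> h /suppP h0; apply: dot_eq0 => j.
  by rewrite [(Phi *m h) j 0]mxE big1 ?mulr0 // => i _; rewrite h0 ?inE // mulr0.
have [_ J0I J0half] := romp_step_selection yI orth half n0 nK g1 gK r0 idJ regJ.
exists y' => //; split; first by case: lsq.
  by move=> h; apply: argmin_residual_orth.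
rewrite setIUl !cardsU.
have -> : I' :&: J0 = set0 by rewrite setIC.
have -> : I' :&: supp v :&: (J0 :&: supp v) = set0.
  by apply/eqP; rewrite setIACA (setIC I') J0I set0I.
by rewrite !cards0 !subn0 mulnDr leq_add.
Qed.

End ROMPIteration.

Section Numerics.
Variable R : realType.

Lemma ric_gamma_le (e : R) : 0 < e -> e <= 17 / 400 -> ric_gamma e <= 9 / 2 * e.
Proof.
move=> e0 e1; have q0 : 0 < (1 - e) ^+ 2 by rewrite exprn_gt0 //; lra.
have w_le : (1 + e) ^+ 2 / (1 - e) ^+ 2 <= 119 / 100.
  by rewrite ler_pdivrMr // !expr2; have := sqr_ge0 e; rewrite expr2; lra.
have w0 : 0 <= (1 + e) ^+ 2 / (1 - e) ^+ 2 by rewrite divr_ge0 ?sqr_ge0 ?ltW.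
have d_le : 2 * e + e ^+ 2 <= 817 / 400 * e.
  by have := mulr_ge0 (ltW e0) (_ : 0 <= 17 / 400 - e); rewrite ?subr_ge0 // expr2; lra.
have d0 : 0 <= 2 * e + e ^+ 2 by rewrite addr_ge0 ?sqr_ge0 ?mulr_ge0 ?ltW.
apply: le_trans (ler_pM d0 _ d_le (lerD (lexx 1) w_le)) _; rewrite ?addr_ge0 //; lra.
Qed.

Lemma romp_gamma_bound (e L : R) (k : nat) : 0 < e -> e ^+ 2 * L = 9 / 10000 ->
  1 / 2 <= L -> 3 / 4 * k%:R <= L ->
  ric_gamma e <= 1 /\ k.+2%:R * (8 * ric_gamma e ^+ 2) <= (1 - ric_gamma e) ^+ 2.
Proof.
move=> e0 eL L2 Lk; have L0 : 0 < L by lra.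
have e2 : e ^+ 2 <= 9 / 5000 by rewrite -(ler_pM2r L0) eL; lra.
have e1 : e <= 17 / 400.
  rewrite leNgt; apply/negP => e_gt; have : 0 < (e - 17 / 400) * (e + 17 / 400).
    by apply: mulr_gt0; lra.
  by rewrite expr2 in e2; lra.
have g0 := ric_gamma_ge0 (ltW e0); have g_le := ric_gamma_le e0 e1.
have g1 : ric_gamma e <= 1 by lra.
split => //.
have lo : 16 / 25 <= (1 - ric_gamma e) ^+ 2.
  by have := mulr_ge0 (_ : 0 <= 1 - ric_gamma e - 4 / 5) (_ : 0 <= 1 - ric_gamma e + 4 / 5);
    rewrite ?expr2; lra.
have hi : ric_gamma e ^+ 2 <= 81 / 4 * e ^+ 2.
  by have := mulr_ge0 (_ : 0 <= 9 / 2 * e - ric_gamma e) (_ : 0 <= 9 / 2 * e + ric_gamma e);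
    rewrite ?expr2; lra.
apply: le_trans lo; rewrite -natr1 -natr1 -addrA.
have k_cases : k%:R = 0 :> R \/ 1 <= k%:R :> R.
  by case: k {Lk} => [|k]; [left | right; rewrite ler1n].
have : (k%:R + 2) * 162 * e ^+ 2 * L <= 16 / 25 * L.
  by rewrite -[_ * e ^+ 2 * L]mulrA eL; case: k_cases => [k0|k1]; rewrite ?k0; lra.
rewrite ler_pM2r // => keL.
apply: le_trans keL; rewrite -mulrA ler_wpM2l ?addr_ge0 ?ler0n //; lra.
Qed.

Lemma ln_ge_1_subV (x : R) : 0 < x -> 1 - x^-1 <= ln x.
Proof.
move=> x0; have x1 : -1 < x^-1 - 1 by rewrite ltrBrDr addrC subrr invr_gt0.
by have := le_ln1Dx x1; rewrite addrC subrK lnV ?posrE //; lra.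
Qed.

Lemma romp_eps_sqr_ln (n : nat) (e : R) : e = 3%:R / 100%:R / Num.sqrt (ln (n%:R : R)) ->
  0 < e -> [/\ (1 < n)%N, e ^+ 2 * ln (n%:R : R) = 9 / 10000 & 1 / 2 <= ln (n%:R : R)].
Proof.
move=> eE e0; have s0 : 0 < Num.sqrt (ln (n%:R : R)).
  by rewrite lt_def sqrtr_ge0 andbT; apply: contraTneq e0 => s0; rewrite eE s0 invr0 mulr0 ltxx.
have L0 : 0 < ln (n%:R : R) by rewrite -sqrtr_gt0.
have n1 : (1 < n)%N.
  by rewrite ltnNge; apply: contraTN L0 => n1; rewrite -leNgt ln_le0 // lern1.
split => //.
  rewrite eE; move: s0 (sqr_sqrtr (ltW L0)); move: (Num.sqrt _) => s s0 <-.
  by field; rewrite gt_eqF.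
have n2 : (2%:R : R) <= n%:R by rewrite ler_nat.
have : (n%:R : R)^-1 <= 2^-1 by rewrite lef_pV2 ?posrE //; lra.
by have := ln_ge_1_subV (_ : 0 < (n%:R : R)); lra.
Qed.

Lemma ln_ge_log4 (n : nat) : (1 < n)%N ->
  exists k : nat, (n <= 4 ^ k.+1)%N /\ 3 / 4 * k%:R <= ln (n%:R : R).
Proof.
move=> n1; exists (trunc_log 4 n.-1); split; first by case: n n1 => // n _; apply: trunc_log_ltn.
have : (4 ^ trunc_log 4 n.-1 <= n)%N.
  by apply: leq_trans (trunc_logP _ _) (leq_pred _); case: n n1.
move: (trunc_log 4 n.-1) => k nk.
have l4 : 3 / 4 <= ln (4 : R) by have := ln_ge_1_subV (_ : 0 < (4 : R)); lra.
have : ln ((4 ^ k)%:R : R) <= ln (n%:R : R).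
  by rewrite ler_ln ?posrE ?ltr0n ?expn_gt0 ?ler_nat //; case: n n1 nk.
rewrite natrX lnXn ?ltr0n // => kn; apply: le_trans kn.
by rewrite -[ln 4 *+ k]mulr_natr; apply: ler_wpM2r; rewrite ?ler0n.
Qed.

End Numerics.

Unset Implicit Arguments.

Theorem theorem3p1 (R : realType) (N d n : nat) (Phi : 'M[R]_(N, d)) (v : 'cV[R]_d) :
  RIC Phi (2 * n)%N (3%:R / 100%:R / Num.sqrt (ln (n%:R : R))) ->
  v != 0 -> sparse n v ->
  forall (I : {set 'I_d}) (r : 'cV[R]_N),
    romp_reach Phi (Phi *m v) n I r -> r != 0 ->
    forall J J0 : {set 'I_d},
      romp_identify n (Phi^T *m r) J ->
      romp_regularize (Phi^T *m r) J J0 ->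
      [/\ J0 != set0, J0 :&: I = set0 & (#|J0| <= 2 * #|J0 :&: supp v|)%N].
Proof.
move=> PhiRIC _ v_sparse I r reach r0 J J0 idJ regJ.
have /andP[e0 _] := RIC_eps PhiRIC.
have [n1 eL L2] := romp_eps_sqr_ln (erefl _) e0.
have [k [nk Lk]] := ln_ge_log4 R n1.
have [g1 gk] := romp_gamma_bound e0 eL L2 Lk.
have n0 : (0 < n)%N by apply: ltnW.
have [y rE [yI orth half]] := romp_reach_invariant PhiRIC v_sparse n0 nk g1 gk reach.
subst r.
by have := romp_step_selection PhiRIC v_sparse yI orth half n0 nk g1 gk r0 idJ regJ.
Qed.
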